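(* Let $E=\mathbb{N}=\{0,1,2,\dots\}$ with the discrete topology, $\rho(n)=e^{n^2}$, and fix $\alpha>1$. For $t\ge0$ define transition probabilities $p_{i,j}(t)$ by: $p_{0,0}(t)=1$; for even $n\ge2$, $p_{n,n}(t)=e^{-(n-1)^\alpha t}$, $p_{n,0}(t)=1-e^{-(n-1)^\alpha t}$; for odd $n$, $p_{n,n}(t)=e^{-n^\alpha t}$, $p_{n,n+1}(t)=e^{-n}n^\alpha t e^{-n^\alpha t}$, $p_{n,0}(t)=1-e^{-n^\alpha t}-e^{-n}n^\alpha te^{-n^\alpha t}$; all other $p_{i,j}(t)=0$ (these are the transition probabilities $e^{tA}$ of the continuous-time Markov chain with rates $a_{n,n+1}=n^\alpha e^{-n}$, $a_{n,n}=-n^\alpha$, $a_{n,0}=n^\alpha(1-e^{-n})$ for odd $n$, and $a_{n,n}=-(n-1)^\alpha$, $a_{n,0}=(n-1)^\alpha$ for even $n$). Set $P(t)f(n):=\sum_j p_{n,j}(t)f(j)$. Then each $P(t)$ is a well-defined bounded linear operator on $\mathscr{B}^\rho(\mathbb{N})$, and for odd $n$ $$P(t)\rho(n)=\rho(n)e^{-n^\alpha t}+\rho(n+1)n^\alpha te^{-n^\alpha t}e^{-n}+\rho(0)\big(1-e^{-n^\alpha t}-e^{-n}n^\alpha te^{-n^\alpha t}\big).$$ The family $(P(t))_{t\ge0}$ satisfies conditions (P1), (P2), (P3), (P5) of a generalized Feller semigroup, but $\|P(t)\|_{L(\mathscr{B}^\rho(\mathbb{N}))}\to\infty$ as $t\downarrow0$;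 in particular (P4) fails and $(P(t))$ is not strongly continuous on $\mathscr{B}^\rho(\mathbb{N})$.
   Context: For a weighted space $(E,\rho)$ and $f:E\to\mathbb{R}$ put $\|f\|_\rho:=\sup_{x\in E}|f(x)|/\rho(x)$; $\mathscr{B}^\rho(E)$ denotes the closure of $C_b(E)$ with respect to $\|\cdot\|_\rho$ inside $\{f:\|f\|_\rho<\infty\}$ (for discrete $\mathbb{N}$ and $\rho(n)=e^{n^2}$ these are the functions with $f(n)/\rho(n)\to0$). The conditions are: (P1) $P(0)=\mathrm{Id}$; (P2) $P(t+s)=P(s)P(t)$ for all $s,t\ge0$; (P3) $\lim_{t\downarrow0}P(t)f(x)=f(x)$ for all $f\in\mathscr{B}^\rho(E)$, $x\in E$; (P4) there exist $\varepsilon>0$, $C<\infty$ with $\|P(t)\|_{L(\mathscr{B}^\rho(E))}\le C$ for all $t\in[0,\varepsilon]$; (P5) each $P(t)$ is a positive operator. Strong continuity means $\|P(t)f-f\|_\rho\to0$ as $t\downarrow0$ for every $f\in\mathscr{B}^\rho(E)$. *)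

From Stdlib Require Import Reals Lra Arith.
From Coquelicot Require Import Coquelicot.
Open Scope R_scope.

Definition rho (n : nat) : R := exp (INR n ^ 2).

Definition wnorm (f : nat -> R) : Rbar :=
  Lub_Rbar (fun r => exists n, r = Rabs (f n) / rho n).

(* C_b(N) for the discrete topology = bounded functions *)
Definition Cb (g : nat -> R) : Prop := exists M, forall n, Rabs (g n) <= M.

(* B^rho(N): closure of C_b(N) w.r.t. ||.||_rho inside {f : ||f||_rho < oo} *)
Definition Brho (f : nat -> R) : Prop :=
  (exists C, Rbar_le (wnorm f) (Finite C)) /\
  forall eps, 0 < eps -> exists g, Cb g /\ Rbar_le (wnorm (fun n => f n - g n)) (Finite eps).

Definition p (alpha : R) (i j : nat) (t : R) : R :=
  if Nat.eqb i 0 then (if Nat.eqb j 0 then 1 else 0)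
  else if Nat.even i then
    let a := Rpower (INR i - 1) alpha in
    if Nat.eqb j i then exp (- a * t)
    else if Nat.eqb j 0 then 1 - exp (- a * t) else 0
  else
    let a := Rpower (INR i) alpha in
    if Nat.eqb j i then exp (- a * t)
    else if Nat.eqb j (i + 1) then exp (- INR i) * a * t * exp (- a * t)
    else if Nat.eqb j 0 then 1 - exp (- a * t) - exp (- INR i) * a * t * exp (- a * t)
    else 0.

Definition P (alpha t : R) (f : nat -> R) (n : nat) : R :=
  Series (fun j => p alpha n j t * f j).

Definition opnorm (alpha t : R) : Rbar :=
  Lub_Rbar (fun r => exists f, Brho f /\ Rbar_le (wnorm f) (Finite 1) /\
                              wnorm (P alpha t f) = Finite r).

From Stdlib Require Import Reals Lra Lia Classical FunctionalExtensionality.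
From Coquelicot Require Import Coquelicot.
Open Scope R_scope.

(* Row n of the transition matrix has at most three nonzero
   entries: p_{n,n} = stay, p_{n,n+1} = jump and p_{n,0} = reset, which are
   nonnegative and sum to 1.  Hence every series P(t)f(n) converges and equals
   the three-term expression [Prow]; all assertions are proved for [Prow].
   - Identity at t = 0, the semigroup law, linearity, positivity and right
     continuity in t are algebraic facts about the three coefficients.
   - Boundedness on B^rho: the only dangerous entry is the jump n -> n+1, and
     jump_n(t) rho(n+1) / rho(n) = e^{n+1} x e^{-x} with x = n^alpha t, which is
     bounded in n for fixed t > 0 because n^alpha t eventually exceeds 2(n+1).
   - Blow-up: for small t there is an odd n, as large as we like, with
     1 <= n^alpha t <= 3^alpha; then e^{n+1} x e^{-x} >= e^{n+1-3^alpha}, so the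
     test function rho * 1_{n+1} of norm 1 has ||P(t)f||_rho arbitrarily large.
     Testing instead with f(j) = e^{-j} rho(j) on even j (0 on odd j), which lies
     in B^rho, gives ||P(t)f - f||_rho >= e^{-3^alpha} for all small t. *)

Lemma exp_le x y : x <= y -> exp x <= exp y.
Proof. intros [H|H]; [left; apply exp_increasing; exact H | subst; lra]. Qed.

Lemma rho_ge1 n : 1 <= rho n.
Proof. unfold rho. rewrite <- exp_0. apply exp_le. pose proof (pos_INR n). nra. Qed.

Lemma rho_pos n : 0 < rho n.
Proof. pose proof (rho_ge1 n). lra. Qed.

Lemma rho_0 : rho 0 = 1.
Proof. unfold rho. simpl. replace (0 * (0 * 1)) with 0 by ring. apply exp_0. Qed.

Lemma rho_le j N : (j <= N)%nat -> rho j <= rho N.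
Proof.
  intros H. unfold rho. apply exp_le. pose proof (le_INR _ _ H). pose proof (pos_INR j). simpl. nra.
Qed.

(* The weight ratio rho(n+1)/rho(n) = e^{2n+1}; this is what the jump must beat. *)
Lemma rho_succ n : rho (n + 1) = rho n * exp (2 * INR n + 1).
Proof. unfold rho. rewrite <- exp_plus, plus_INR. f_equal. simpl. ring. Qed.

Lemma wnorm_le_of_bound (h : nat -> R) c :
  (forall n, Rabs (h n) <= c * rho n) -> Rbar_le (wnorm h) (Finite c).
Proof.
  intros H. unfold wnorm. apply Lub_Rbar_correct. intros x [n ->]. simpl.
  pose proof (rho_pos n). apply Rle_div_l; [lra | apply H].
Qed.

Lemma wnorm_ge (h : nat -> R) n : Rbar_le (Finite (Rabs (h n) / rho n)) (wnorm h).
Proof. unfold wnorm. apply Lub_Rbar_correct. eauto. Qed.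

Lemma bound_of_wnorm_le (h : nat -> R) c :
  Rbar_le (wnorm h) (Finite c) -> forall n, Rabs (h n) <= c * rho n.
Proof.
  intros H n. pose proof (Rbar_le_trans _ _ (Finite c) (wnorm_ge h n) H) as Hn. simpl in Hn.
  pose proof (rho_pos n). apply Rle_div_l in Hn; lra.
Qed.

Lemma Brho_bound f : Brho f -> exists r, wnorm f = Finite r /\ forall j, Rabs (f j) <= r * rho j.
Proof.
  intros [[C HC] _]. pose proof (wnorm_ge f 0) as H0.
  destruct (wnorm f) as [r| |] eqn:E; simpl in HC, H0; try contradiction.
  exists r. split; [reflexivity|]. apply bound_of_wnorm_le. rewrite E. apply Rbar_le_refl.
Qed.

Lemma Cb_Brho f : Cb f -> Brho f.
Proof.
  intros [M HM]. split.
  - exists M. apply wnorm_le_of_bound. intros n.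
    pose proof (rho_ge1 n). pose proof (HM n). pose proof (Rabs_pos (f n)). nra.
  - intros eps Heps. exists f. split; [exists M; exact HM|]. apply wnorm_le_of_bound. intros n.
    replace (f n - f n) with 0 by ring. rewrite Rabs_R0. pose proof (rho_pos n). nra.
Qed.

(* A function with |f j| <= e^{-j} rho(j) lies in B^rho: its truncations
   approximate it within e^{-N} in the weighted norm. *)
Lemma Brho_of_decay f : (forall j, Rabs (f j) <= exp (- INR j) * rho j) -> Brho f.
Proof.
  intros Hf. assert (He : forall j, exp (- INR j) <= 1).
  { intros j. rewrite <- exp_0. apply exp_le. pose proof (pos_INR j). lra. }
  split.
  - exists 1. apply wnorm_le_of_bound. intros n.
    pose proof (Hf n). pose proof (He n). pose proof (rho_pos n). nra.
  - intros eps Heps. destruct (INR_unbounded (/ eps)) as [N HN].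
    exists (fun j => if Nat.leb j N then f j else 0). split.
    + exists (rho N). intros j. destruct (Nat.leb_spec j N) as [Hj|Hj].
      * pose proof (Hf j). pose proof (He j). pose proof (rho_le j N Hj). pose proof (rho_pos j). nra.
      * rewrite Rabs_R0. left. apply rho_pos.
    + apply wnorm_le_of_bound. intros j. destruct (Nat.leb_spec j N) as [Hj|Hj].
      * replace (f j - f j) with 0 by ring. rewrite Rabs_R0. pose proof (rho_pos j). nra.
      * replace (f j - 0) with (f j) by ring.
        assert (Hsmall : exp (- INR j) < eps).
        { pose proof (exp_ineq1_le (INR j)). pose proof (lt_INR _ _ Hj).
          assert (/ eps < exp (INR j)) by lra.
          rewrite exp_Ropp, <- (Rinv_inv eps). apply Rinv_lt_contravar; [|lra].
          apply Rmult_lt_0_compat; [apply Rinv_0_lt_compat; lra | apply exp_pos]. }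
        pose proof (Hf j). pose proof (rho_pos j). nra.
Qed.

Definition rate (alpha : R) (n : nat) : R :=
  if Nat.eqb n 0 then 0
  else if Nat.even n then Rpower (INR n - 1) alpha else Rpower (INR n) alpha.

Definition stay (alpha : R) (n : nat) (t : R) : R := exp (- rate alpha n * t).

Definition jump (alpha : R) (n : nat) (t : R) : R :=
  if Nat.odd n then exp (- INR n) * rate alpha n * t * exp (- rate alpha n * t) else 0.

Definition reset (alpha : R) (n : nat) (t : R) : R := 1 - stay alpha n t - jump alpha n t.

Definition Prow (alpha t : R) (f : nat -> R) (n : nat) : R :=
  stay alpha n t * f n + jump alpha n t * f (n + 1)%nat + reset alpha n t * f 0%nat.

Lemma rate_nonneg alpha n : 0 <= rate alpha n.
Proof.
  unfold rate, Rpower. destruct (Nat.eqb n 0); [lra|].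
  destruct (Nat.even n); left; apply exp_pos.
Qed.

Lemma rate_odd alpha n : Nat.odd n = true -> rate alpha n = Rpower (INR n) alpha.
Proof.
  intros Ho. unfold rate. destruct (Nat.eqb_spec n 0) as [->|]; [discriminate|].
  rewrite <- Nat.negb_odd, Ho. reflexivity.
Qed.

Lemma rate_succ_odd alpha n : Nat.odd n = true -> rate alpha (n + 1) = rate alpha n.
Proof.
  intros Ho. rewrite (rate_odd _ _ Ho). unfold rate.
  destruct (Nat.eqb_spec (n + 1) 0) as [|_]; [lia|].
  rewrite Nat.add_1_r, Nat.even_succ, Ho, S_INR. f_equal. ring.
Qed.

Lemma jump_even alpha n t : Nat.odd n = false -> jump alpha n t = 0.
Proof. intros He. unfold jump. rewrite He. reflexivity. Qed.

Lemma odd_succ_even n : Nat.odd n = true -> Nat.odd (n + 1) = false.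
Proof. intros Ho. rewrite Nat.add_1_r, Nat.odd_succ, <- Nat.negb_odd, Ho. reflexivity. Qed.

Lemma row_state0 alpha t : stay alpha 0 t = 1 /\ jump alpha 0 t = 0 /\ reset alpha 0 t = 0.
Proof.
  assert (Hs : stay alpha 0 t = 1).
  { unfold stay, rate. simpl. rewrite <- exp_0. f_equal. ring. }
  assert (Hj : jump alpha 0 t = 0) by (apply jump_even; reflexivity).
  unfold reset. rewrite Hs, Hj. repeat split; ring.
Qed.

Lemma p_row alpha n j t :
  p alpha n j t =
  if Nat.eqb j n then stay alpha n t
  else if Nat.eqb j (n + 1) then jump alpha n t
  else if Nat.eqb j 0 then reset alpha n t else 0.
Proof.
  destruct (Nat.eqb_spec n 0) as [->|Hn].
  - destruct (row_state0 alpha t) as [Hs [Hj _]]. unfold p. simpl Nat.eqb.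
    destruct (Nat.eqb_spec j 0); [now rewrite Hs|].
    destruct (Nat.eqb_spec j 1); [now rewrite Hj | reflexivity].
  - unfold p, reset, jump, stay, rate. cbv zeta.
    destruct (Nat.eqb_spec n 0); [lia|]. rewrite <- Nat.negb_odd.
    destruct (Nat.odd n); simpl negb; cbv iota.
    + reflexivity.
    + destruct (Nat.eqb_spec j n); [reflexivity|].
      destruct (Nat.eqb_spec j (n + 1)); [destruct (Nat.eqb_spec j 0); [lia|reflexivity]|].
      destruct (Nat.eqb_spec j 0); [ring|reflexivity].
Qed.

Definition point_mass (m : nat) (c : R) (j : nat) : R := if Nat.eqb j m then c else 0.

Lemma sum_point_mass m c k : sum_n (point_mass m c) k = if Nat.leb m k then c else 0.
Proof.
  induction k as [|k IH].
  - rewrite sum_O. unfold point_mass. destruct m; reflexivity.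
  - rewrite sum_Sn, IH. unfold point_mass.
    destruct (Nat.leb_spec m k), (Nat.eqb_spec (S k) m), (Nat.leb_spec m (S k));
      try lia; unfold plus; simpl; ring.
Qed.

Lemma is_series_point_mass m c : is_series (point_mass m c) c.
Proof.
  unfold is_series. change (is_lim_seq (sum_n (point_mass m c)) c).
  apply (is_lim_seq_ext_loc (fun _ => c)); [|apply is_lim_seq_const].
  exists m. intros k Hk. rewrite sum_point_mass.
  destruct (Nat.leb_spec m k); [reflexivity | lia].
Qed.

Lemma p_times_f alpha t f n j :
  p alpha n j t * f j =
  point_mass n (stay alpha n t * f n) j + point_mass (n + 1) (jump alpha n t * f (n + 1)%nat) j
  + point_mass 0 (reset alpha n t * f 0%nat) j.
Proof.
  rewrite p_row. unfold point_mass.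
  destruct (Nat.eqb_spec j n), (Nat.eqb_spec j (n + 1)), (Nat.eqb_spec j 0);
    subst; try lia; unfold plus; simpl; try ring.
  destruct (row_state0 alpha t) as [_ [_ ->]]. unfold plus; simpl; ring.
Qed.

Lemma is_series_P alpha t f n : is_series (fun j => p alpha n j t * f j) (Prow alpha t f n).
Proof.
  eapply is_series_ext; [intros j; symmetry; apply p_times_f|].
  apply (is_series_plus _ _ _ _
           (is_series_plus _ _ _ _ (is_series_point_mass _ _) (is_series_point_mass _ _))
           (is_series_point_mass _ _)).
Qed.

Lemma P_Prow alpha t f : P alpha t f = Prow alpha t f.
Proof. apply functional_extensionality. intros n. apply is_series_unique, is_series_P. Qed.

Lemma Prow_time0 alpha f : Prow alpha 0 f = f.
Proof.
  apply functional_extensionality. intros n. unfold Prow, reset, stay, jump.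
  rewrite !Rmult_0_r, exp_0. destruct (Nat.odd n); ring.
Qed.

Lemma Prow_state0 alpha t f : Prow alpha t f 0 = f 0%nat.
Proof. unfold Prow. destruct (row_state0 alpha t) as [-> [-> ->]]. ring. Qed.

Lemma stay_add alpha n t s : stay alpha n (t + s) = stay alpha n t * stay alpha n s.
Proof. unfold stay. rewrite <- exp_plus. f_equal. ring. Qed.

Lemma jump_add alpha n t s :
  jump alpha n (t + s) = jump alpha n t * stay alpha n s + stay alpha n t * jump alpha n s.
Proof.
  pose proof (stay_add alpha n t s) as Hs. unfold stay in Hs. unfold jump, stay.
  destruct (Nat.odd n); [rewrite Hs|]; ring.
Qed.

(* (P2): for odd n the intermediate state n+1 is even, with the same rate. *)
Lemma Prow_semigroup alpha t s f : Prow alpha (t + s) f = Prow alpha s (Prow alpha t f).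
Proof.
  apply functional_extensionality. intros n. unfold Prow at 2. rewrite !Prow_state0.
  unfold Prow, reset. rewrite stay_add, jump_add.
  destruct (Nat.odd n) eqn:Ho.
  - assert (Hs : stay alpha (n + 1) t = stay alpha n t)
      by (unfold stay; rewrite rate_succ_odd by exact Ho; reflexivity).
    rewrite Hs, (jump_even alpha (n + 1)) by (apply odd_succ_even; exact Ho). ring.
  - rewrite !(jump_even alpha n) by exact Ho. ring.
Qed.

Lemma Prow_linear alpha t f g c :
  Prow alpha t (fun n => c * f n + g n) = (fun n => c * Prow alpha t f n + Prow alpha t g n).
Proof. apply functional_extensionality. intros n. unfold Prow. ring. Qed.

Lemma Prow_sub alpha t f g n :
  Prow alpha t f n - Prow alpha t g n = Prow alpha t (fun j => f j - g j) n.
Proof. unfold Prow. ring. Qed.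

(* (P3): each coefficient is smooth in t and P(0)f = f. *)
Lemma Prow_right_continuous alpha f n :
  filterlim (fun t => Prow alpha t f n) (at_right 0) (locally (f n)).
Proof.
  assert (Hc : continuous (fun t => Prow alpha t f n) 0).
  { apply (@ex_derive_continuous R_AbsRing R_NormedModule).
    unfold Prow, reset, jump, stay. destruct (Nat.odd n); auto_derive; auto. }
  replace (f n) with (Prow alpha 0 f n) by (rewrite Prow_time0; reflexivity).
  eapply filterlim_filter_le_1; [|exact Hc].
  intros Q [e He]. exists e. intros y Hy _. apply He, Hy.
Qed.

(* From e^{x} >= 1 + x: 0 <= c x e^{-x} <= 1 - e^{-x} for x >= 0, 0 <= c <= 1. *)
Lemma exp_decay_bounds a c t : 0 <= a -> 0 <= c <= 1 -> 0 <= t ->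
  0 <= c * a * t * exp (- a * t) <= 1 - exp (- a * t).
Proof.
  intros Ha Hc Ht. pose proof (exp_pos (- a * t)). pose proof (exp_ineq1_le (a * t)).
  assert (Hinv : exp (a * t) * exp (- a * t) = 1).
  { rewrite <- exp_plus, <- exp_0. f_equal. ring. }
  assert (0 <= a * t) by nra. assert (0 <= a * t * exp (- a * t)) by nra.
  split; nra.
Qed.

Lemma row_nonneg alpha n t : 0 <= t ->
  0 <= stay alpha n t /\ 0 <= jump alpha n t /\ 0 <= reset alpha n t.
Proof.
  intros Ht. pose proof (rate_nonneg alpha n) as Hr.
  assert (Hc : 0 <= exp (- INR n) <= 1).
  { split; [left; apply exp_pos|]. rewrite <- exp_0. apply exp_le. pose proof (pos_INR n). lra. }
  destruct (exp_decay_bounds _ _ t Hr Hc Ht) as [H1 H2].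
  destruct (exp_decay_bounds _ 0 t Hr ltac:(lra) Ht) as [_ H3].
  unfold reset, jump, stay. pose proof (exp_pos (- rate alpha n * t)).
  destruct (Nat.odd n); repeat split; lra.
Qed.

Lemma Prow_abs_le alpha t h n : 0 <= t ->
  Rabs (Prow alpha t h n) <=
  stay alpha n t * Rabs (h n) + jump alpha n t * Rabs (h (n + 1)%nat)
  + reset alpha n t * Rabs (h 0%nat).
Proof.
  intros Ht. destruct (row_nonneg alpha n t Ht) as [Hs [Hj Hr]]. unfold Prow.
  eapply Rle_trans; [apply Rabs_triang|]. eapply Rle_trans; [apply Rplus_le_compat_r, Rabs_triang|].
  rewrite !Rabs_mult, (Rabs_pos_eq (stay _ _ _)), (Rabs_pos_eq (jump _ _ _)),
    (Rabs_pos_eq (reset _ _ _)) by assumption.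
  lra.
Qed.

Lemma Prow_nonneg alpha t f n : 0 <= t -> (forall j, 0 <= f j) -> 0 <= Prow alpha t f n.
Proof.
  intros Ht Hf. destruct (row_nonneg alpha n t Ht) as [Hs [Hj Hr]]. unfold Prow.
  pose proof (Hf n). pose proof (Hf (n + 1)%nat). pose proof (Hf 0%nat).
  repeat apply Rplus_le_le_0_compat; apply Rmult_le_pos; assumption.
Qed.

Lemma Prow_Cb alpha t f : 0 <= t -> Cb f -> Cb (Prow alpha t f).
Proof.
  intros Ht [M HM]. exists M. intros n. eapply Rle_trans; [apply Prow_abs_le, Ht|].
  destruct (row_nonneg alpha n t Ht) as [Hs [Hj Hr]].
  pose proof (HM n). pose proof (HM (n + 1)%nat). pose proof (HM 0%nat).
  assert (Hsum : stay alpha n t + jump alpha n t + reset alpha n t = 1) by (unfold reset; ring).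
  nra.
Qed.

Lemma rpower_growth alpha (Ha : 1 < alpha) t (Ht : 0 < t) :
  exists N, forall n, (N <= n)%nat -> 2 * (INR n + 1) <= Rpower (INR n) alpha * t.
Proof.
  destruct (INR_unbounded (Rpower (4 / t) (/ (alpha - 1)))) as [N HN].
  exists (S N). intros n Hn.
  assert (HNn : INR N + 1 <= INR n) by (rewrite <- S_INR; apply le_INR, Hn).
  assert (Hn1 : 1 <= INR n) by (pose proof (pos_INR N); lra).
  assert (Hgrow : 4 / t <= Rpower (INR n) (alpha - 1)).
  { replace (4 / t) with (Rpower (Rpower (4 / t) (/ (alpha - 1))) (alpha - 1)).
    - apply Rle_Rpower_l; [lra|]. split; [apply exp_pos | lra].
    - rewrite Rpower_mult, Rinv_l, Rpower_1; [reflexivity | |lra].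
      apply Rdiv_lt_0_compat; lra. }
  replace alpha with (1 + (alpha - 1)) at 1 by ring.
  rewrite Rpower_plus, Rpower_1 by lra.
  assert (4 / t * t = 4) by (field; lra).
  assert (INR n * (4 / t) <= INR n * Rpower (INR n) (alpha - 1)) by (apply Rmult_le_compat_l; lra).
  nra.
Qed.

Lemma jump_weight alpha n t : Nat.odd n = true ->
  jump alpha n t * rho (n + 1) =
  rho n * exp (INR n + 1) * (rate alpha n * t * exp (- (rate alpha n * t))).
Proof.
  intros Ho. unfold jump. rewrite Ho, rho_succ.
  replace (- rate alpha n * t) with (- (rate alpha n * t)) by ring.
  replace (exp (INR n + 1)) with (exp (- INR n) * exp (2 * INR n + 1))
    by (rewrite <- exp_plus; f_equal; ring).
  ring.
Qed.

Lemma xexp_half_le x : 0 <= x -> x * exp (- x / 2) <= 2.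
Proof.
  intros Hx. pose proof (exp_ineq1_le (x / 2)). pose proof (exp_pos (- x / 2)).
  assert (exp (x / 2) * exp (- x / 2) = 1) by (rewrite <- exp_plus, <- exp_0; f_equal; field).
  nra.
Qed.

Lemma jump_weight_bounded alpha (Ha : 1 < alpha) t (Ht : 0 <= t) :
  exists K, 0 <= K /\ forall n, jump alpha n t * rho (n + 1) <= K * rho n.
Proof.
  destruct Ht as [Ht | <-].
  - destruct (rpower_growth alpha Ha t Ht) as [N HN].
    exists (2 * exp (INR N + 1)). split; [pose proof (exp_pos (INR N + 1)); lra|]. intros n.
    destruct (Nat.odd n) eqn:Ho.
    2:{ rewrite jump_even by exact Ho. pose proof (exp_pos (INR N + 1)). pose proof (rho_pos n). nra. }
    rewrite jump_weight by exact Ho. set (x := rate alpha n * t).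
    assert (Hx : 0 <= x) by (unfold x; pose proof (rate_nonneg alpha n); nra).
    assert (Hsplit : exp (INR n + 1) * (x * exp (- x)) = (x * exp (- x / 2)) * exp (INR n + 1 - x / 2)).
    { replace (exp (- x)) with (exp (- x / 2) * exp (- x / 2)) by (rewrite <- exp_plus; f_equal; field).
      replace (exp (INR n + 1 - x / 2)) with (exp (INR n + 1) * exp (- x / 2))
        by (rewrite <- exp_plus; f_equal; field).
      ring. }
    assert (Htail : exp (INR n + 1 - x / 2) <= exp (INR N + 1)).
    { apply exp_le. destruct (Nat.le_gt_cases N n) as [Hle | Hlt].
      - pose proof (HN n Hle). rewrite <- (rate_odd alpha n Ho) in H. fold x in H.
        pose proof (pos_INR N). lra.
      - pose proof (lt_INR _ _ Hlt). lra. }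
    pose proof (xexp_half_le x Hx). pose proof (exp_pos (- x / 2)).
    pose proof (exp_pos (INR n + 1 - x / 2)).
    pose proof (rho_pos n).
    assert (0 <= x * exp (- x / 2)) by nra.
    rewrite Rmult_assoc, Hsplit, (Rmult_comm _ (rho n)).
    apply Rmult_le_compat_l; [lra|]. apply Rmult_le_compat; lra.
  - exists 0. split; [lra|]. intros n. unfold jump.
    destruct (Nat.odd n); rewrite ?Rmult_0_r, ?Rmult_0_l; lra.
Qed.

Lemma Prow_weighted_bound alpha (Ha : 1 < alpha) t (Ht : 0 <= t) :
  exists C, 0 < C /\ forall (h : nat -> R) w, (forall j, Rabs (h j) <= w * rho j) ->
    forall n, Rabs (Prow alpha t h n) <= C * w * rho n.
Proof.
  destruct (jump_weight_bounded alpha Ha t Ht) as [K [HK HKn]].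
  exists (1 + K). split; [lra|]. intros h w Hh n.
  pose proof (Hh 0%nat) as Hh0. rewrite rho_0 in Hh0.
  assert (Hw : 0 <= w) by (pose proof (Rabs_pos (h 0%nat)); lra).
  eapply Rle_trans; [apply Prow_abs_le, Ht|].
  destruct (row_nonneg alpha n t Ht) as [Hs [Hj Hr]].
  pose proof (Hh n). pose proof (Hh (n + 1)%nat). pose proof (rho_ge1 n). pose proof (HKn n).
  assert (Hsr : stay alpha n t + reset alpha n t <= 1) by (unfold reset; lra).
  assert (Hwr : 0 <= w * rho n) by (pose proof (rho_pos n); nra).
  assert (Hjump : jump alpha n t * Rabs (h (n + 1)%nat) <= w * (K * rho n)).
  { apply Rle_trans with (jump alpha n t * (w * rho (n + 1))).
    - apply Rmult_le_compat_l; assumption.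
    - nra. }
  assert (Hrest : stay alpha n t * Rabs (h n) + reset alpha n t * Rabs (h 0%nat) <= w * rho n).
  { apply Rle_trans with (stay alpha n t * (w * rho n) + reset alpha n t * (w * rho n)).
    - apply Rplus_le_compat; apply Rmult_le_compat_l; nra.
    - rewrite <- Rmult_plus_distr_r. rewrite <- (Rmult_1_l (w * rho n)) at 2.
      apply Rmult_le_compat_r; assumption. }
  nra.
Qed.

(* Each P(t), t >= 0, is a bounded linear operator on B^rho; preservation of
   B^rho follows by approximating with bounded functions. *)
Lemma P_bounded_operator alpha (Ha : 1 < alpha) t (Ht : 0 <= t) :
  (forall f, Brho f -> forall n, ex_series (fun j => p alpha n j t * f j)) /\
  (forall f, Brho f -> Brho (P alpha t f)) /\
  (forall f g c, Brho f -> Brho g ->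
     P alpha t (fun n => c * f n + g n) = (fun n => c * P alpha t f n + P alpha t g n)) /\
  (exists C, forall f, Brho f ->
     Rbar_le (wnorm (P alpha t f)) (Rbar_mult (Finite C) (wnorm f))).
Proof.
  destruct (Prow_weighted_bound alpha Ha t Ht) as [C [HC HB]].
  split; [|split; [|split]].
  - intros f _ n. eexists. apply is_series_P.
  - intros f Hf. rewrite P_Prow. destruct (Brho_bound f Hf) as [r [_ Hr]]. split.
    + exists (C * r). apply wnorm_le_of_bound. intros n. apply HB, Hr.
    + intros eps Heps. destruct Hf as [_ Happrox].
      destruct (Happrox (eps / C)) as [g [Hg Hfg]]; [apply Rdiv_lt_0_compat; lra|].
      exists (Prow alpha t g). split; [apply Prow_Cb; assumption|].
      apply wnorm_le_of_bound. intros n. rewrite Prow_sub.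
      replace eps with (C * (eps / C)) by (field; lra).
      apply HB, bound_of_wnorm_le, Hfg.
  - intros f g c _ _. rewrite !P_Prow. apply Prow_linear.
  - exists C. intros f Hf. rewrite P_Prow. destruct (Brho_bound f Hf) as [r [-> Hr]].
    apply wnorm_le_of_bound. intros n. apply HB, Hr.
Qed.

Lemma first_crossing (Q : nat -> Prop) m K :
  ~ Q m -> Q K -> (m <= K)%nat -> exists k, (m <= k)%nat /\ ~ Q k /\ Q (S k).
Proof.
  intros Hm. induction K as [|K IH]; intros HK Hle.
  - replace m with 0%nat in Hm by lia. contradiction.
  - destruct (Nat.eq_dec m (S K)) as [->|Hne]; [contradiction|].
    destruct (classic (Q K)) as [HQ|HQ].
    + apply IH; [exact HQ | lia].
    + exists K. repeat split; [lia | exact HQ | exact HK].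
Qed.

Lemma rpower_ge_base alpha x : 1 <= alpha -> 1 <= x -> x <= Rpower x alpha.
Proof. intros Ha Hx. rewrite <- (Rpower_1 x) at 1 by lra. apply Rle_Rpower; lra. Qed.

Lemma rpower_step_ratio alpha x : 0 <= alpha -> 1 <= x ->
  Rpower (x + 2) alpha <= Rpower 3 alpha * Rpower x alpha.
Proof.
  intros Ha Hx. rewrite Rpower_mult_distr by lra.
  apply Rle_Rpower_l; lra.
Qed.

(* For small t there is an odd n >= N with n^alpha t in [1, 3^alpha]: take the
   first odd index past the crossing of the level 1. *)
Lemma odd_index_in_window alpha (Ha : 1 < alpha) (N : nat) :
  exists delta, 0 < delta /\ forall t, 0 < t < delta ->
  exists n, Nat.odd n = true /\ (N <= n)%nat /\ 1 <= Rpower (INR n) alpha * t <= Rpower 3 alpha.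
Proof.
  set (a := fun k : nat => Rpower (INR (2 * k + 1)) alpha).
  assert (Ha_pos : forall k, 0 < a k) by (intros k; apply exp_pos).
  exists (/ a N). split; [apply Rinv_0_lt_compat, Ha_pos|]. intros t [Ht Htd].
  set (Q := fun k => 1 <= a k * t).
  assert (HQN : ~ Q N).
  { unfold Q. pose proof (Ha_pos N). apply Rmult_lt_compat_l with (r := a N) in Htd; [|lra].
    rewrite Rinv_r in Htd; lra. }
  destruct (INR_unbounded (Rmax (/ t) (INR N))) as [K HK].
  pose proof (Rmax_l (/ t) (INR N)). pose proof (Rmax_r (/ t) (INR N)).
  assert (HQK : Q K).
  { unfold Q, a. assert (Hodd : INR K <= INR (2 * K + 1)) by (apply le_INR; lia).
    pose proof (rpower_ge_base alpha (INR (2 * K + 1)) ltac:(lra) ltac:(apply (le_INR 1); lia)).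
    assert (/ t * t = 1) by (field; lra). nra. }
  assert (HNK : (N <= K)%nat) by (apply INR_le; lra).
  destruct (first_crossing Q N K HQN HQK HNK) as [k [Hk [Hnot Hyes]]].
  exists (2 * S k + 1)%nat. split; [apply Nat.odd_odd|]. split; [lia|]. split; [exact Hyes|].
  unfold Q, a in Hnot. apply Rnot_le_lt in Hnot.
  assert (Hstep : Rpower (INR (2 * S k + 1)) alpha <= Rpower 3 alpha * Rpower (INR (2 * k + 1)) alpha).
  { replace (INR (2 * S k + 1)) with (INR (2 * k + 1) + 2)
      by (rewrite !plus_INR, !mult_INR, (S_INR k); simpl (INR 2); simpl (INR 1); ring).
    apply rpower_step_ratio; [lra|]. apply (le_INR 1); lia. }
  assert (H3 : 0 < Rpower 3 alpha) by apply exp_pos.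
  apply Rle_trans with (Rpower 3 alpha * Rpower (INR (2 * k + 1)) alpha * t).
  - apply Rmult_le_compat_r; lra.
  - rewrite Rmult_assoc. rewrite <- (Rmult_1_r (Rpower 3 alpha)) at 2. apply Rmult_le_compat_l; lra.
Qed.

Lemma jump_weight_in_window alpha n t : Nat.odd n = true ->
  1 <= rate alpha n * t <= Rpower 3 alpha ->
  rho n * exp (INR n + 1) * exp (- Rpower 3 alpha) <= jump alpha n t * rho (n + 1).
Proof.
  intros Ho [Hlo Hhi]. rewrite jump_weight by exact Ho.
  set (x := rate alpha n * t) in *.
  assert (exp (- Rpower 3 alpha) <= exp (- x)) by (apply exp_le; lra).
  pose proof (exp_pos (- x)). pose proof (rho_pos n). pose proof (exp_pos (INR n + 1)).
  apply Rmult_le_compat_l; nra.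
Qed.

Lemma opnorm_ge_test alpha t f : Brho f -> Rbar_le (wnorm f) (Finite 1) -> Brho (P alpha t f) ->
  forall n, Rbar_le (Finite (Rabs (P alpha t f n) / rho n)) (opnorm alpha t).
Proof.
  intros Hf Hf1 HPf n. destruct (Brho_bound _ HPf) as [r [Er _]].
  apply Rbar_le_trans with (Finite r).
  - rewrite <- Er. apply wnorm_ge.
  - unfold opnorm. apply Lub_Rbar_correct. exists f. auto.
Qed.

(* ||P(t)|| -> oo as t decreases to 0, tested with f = rho 1_{n+1}. *)
Lemma opnorm_blowup alpha (Ha : 1 < alpha) (M : R) : exists delta, 0 < delta /\
  forall t, 0 < t < delta -> Rbar_lt (Finite M) (opnorm alpha t).
Proof.
  destruct (INR_unbounded (Rpower 3 alpha + Rabs M)) as [N HN].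
  destruct (odd_index_in_window alpha Ha N) as [delta [Hd Hwin]].
  exists delta. split; [exact Hd|]. intros t Ht.
  destruct (Hwin t Ht) as [n [Ho [HnN Hx]]]. rewrite <- (rate_odd alpha n Ho) in Hx.
  set (f := point_mass (n + 1) (rho (n + 1))).
  assert (Hf : forall j, Rabs (f j) <= 1 * rho j).
  { intros j. unfold f, point_mass. pose proof (rho_pos j).
    destruct (Nat.eqb_spec j (n + 1)) as [->|]; rewrite ?Rabs_R0, ?Rabs_pos_eq; lra. }
  assert (HfB : Brho f).
  { apply Cb_Brho. exists (rho (n + 1)). intros j. pose proof (rho_pos (n + 1)).
    unfold f, point_mass. destruct (Nat.eqb_spec j (n + 1)); rewrite ?Rabs_R0, ?Rabs_pos_eq; lra. }
  destruct (P_bounded_operator alpha Ha t ltac:(lra)) as [_ [HPB _]].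
  eapply Rbar_lt_le_trans;
    [|apply (opnorm_ge_test alpha t f HfB (wnorm_le_of_bound f 1 Hf) (HPB f HfB) n)].
  simpl. rewrite P_Prow. unfold Prow, f, point_mass.
  destruct (Nat.eqb_spec n (n + 1)), (Nat.eqb_spec (n + 1) (n + 1)), (Nat.eqb_spec 0 (n + 1)); try lia.
  rewrite !Rmult_0_r, Rplus_0_l, Rplus_0_r.
  pose proof (jump_weight_in_window alpha n t Ho Hx) as Hlow.
  assert (Hpos : 0 <= rho n * exp (INR n + 1) * exp (- Rpower 3 alpha)).
  { pose proof (rho_pos n). pose proof (exp_pos (INR n + 1)). pose proof (exp_pos (- Rpower 3 alpha)).
    apply Rmult_le_pos; [apply Rmult_le_pos|]; lra. }
  rewrite Rabs_pos_eq by lra.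
  apply Rlt_le_trans with (exp (INR n + 1) * exp (- Rpower 3 alpha)).
  - rewrite <- exp_plus. pose proof (exp_ineq1_le (INR n + 1 + - Rpower 3 alpha)).
    pose proof (le_INR _ _ HnN). pose proof (Rle_abs M). lra.
  - apply (Rle_div_r _ _ _ (rho_pos n)). rewrite Rmult_comm, <- Rmult_assoc. exact Hlow.
Qed.

Lemma not_locally_bounded alpha (Ha : 1 < alpha) :
  ~ (exists eps C, 0 < eps /\ forall t, 0 <= t <= eps -> Rbar_le (opnorm alpha t) (Finite C)).
Proof.
  intros [eps [C [He Hbound]]]. destruct (opnorm_blowup alpha Ha C) as [d [Hd Hblow]].
  set (t := Rmin eps d / 2).
  pose proof (Rmin_glb_lt eps d 0 He Hd). pose proof (Rmin_l eps d). pose proof (Rmin_r eps d).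
  apply (Rbar_lt_not_le _ _ (Hblow t ltac:(unfold t; lra)) (Hbound t ltac:(unfold t; lra))).
Qed.

(* The test function witnessing the failure of strong continuity. *)
Definition even_profile (j : nat) : R := if Nat.odd j then 0 else exp (- INR j) * rho j.

Lemma Brho_even_profile : Brho even_profile.
Proof.
  apply Brho_of_decay. intros j. unfold even_profile.
  pose proof (exp_pos (- INR j)). pose proof (rho_pos j).
  destruct (Nat.odd j); rewrite ?Rabs_R0, ?Rabs_pos_eq; nra.
Qed.

Lemma even_profile_gap alpha n t : Nat.odd n = true -> 0 <= t ->
  1 <= rate alpha n * t <= Rpower 3 alpha ->
  rho n * exp (- Rpower 3 alpha) <= Prow alpha t even_profile n - even_profile n.
Proof.
  intros Ho Ht Hx. destruct (row_nonneg alpha n t Ht) as [_ [_ Hr]].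
  pose proof (jump_weight_in_window alpha n t Ho Hx) as Hlow.
  unfold Prow, even_profile. rewrite Ho, (odd_succ_even n Ho). change (Nat.odd 0) with false. cbv iota.
  replace (exp (- INR 0) * rho 0) with 1 by (rewrite rho_0; simpl; rewrite Ropp_0, exp_0; ring).
  assert (Hcancel : exp (- INR (n + 1)) * exp (INR n + 1) = 1).
  { rewrite <- exp_plus. replace (- INR (n + 1) + (INR n + 1)) with 0 by (rewrite plus_INR; simpl; ring).
    apply exp_0. }
  assert (Hjump : rho n * exp (- Rpower 3 alpha)
                  <= jump alpha n t * (exp (- INR (n + 1)) * rho (n + 1))).
  { apply Rle_trans with (exp (- INR (n + 1)) * (rho n * exp (INR n + 1) * exp (- Rpower 3 alpha))).
    - right. transitivity (exp (- INR (n + 1)) * exp (INR n + 1) * (rho n * exp (- Rpower 3 alpha)));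
        [rewrite Hcancel; ring | ring].
    - replace (jump alpha n t * (exp (- INR (n + 1)) * rho (n + 1)))
        with (exp (- INR (n + 1)) * (jump alpha n t * rho (n + 1))) by ring.
      apply Rmult_le_compat_l; [left; apply exp_pos | exact Hlow]. }
  lra.
Qed.

Lemma not_strongly_continuous alpha (Ha : 1 < alpha) :
  ~ (forall f, Brho f -> forall eps, 0 < eps -> exists delta, 0 < delta /\
       forall t, 0 < t < delta -> Rbar_le (wnorm (fun n => P alpha t f n - f n)) (Finite eps)).
Proof.
  intros Hsc. pose proof (exp_pos (- Rpower 3 alpha)) as Hc.
  destruct (Hsc even_profile Brho_even_profile (exp (- Rpower 3 alpha) / 2)) as [d1 [Hd1 Hclose]];
    [lra|].
  destruct (odd_index_in_window alpha Ha 0) as [d2 [Hd2 Hwin]].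
  set (t := Rmin d1 d2 / 2).
  pose proof (Rmin_glb_lt d1 d2 0 Hd1 Hd2). pose proof (Rmin_l d1 d2). pose proof (Rmin_r d1 d2).
  destruct (Hwin t ltac:(unfold t; lra)) as [n [Ho [_ Hx]]]. rewrite <- (rate_odd alpha n Ho) in Hx.
  pose proof (bound_of_wnorm_le _ _ (Hclose t ltac:(unfold t; lra)) n) as Hn. cbv beta in Hn.
  rewrite P_Prow in Hn.
  pose proof (even_profile_gap alpha n t Ho ltac:(unfold t; lra) Hx) as Hgap.
  pose proof (rho_pos n). rewrite Rabs_pos_eq in Hn by nra. nra.
Qed.

Theorem mainTheorem20 (alpha : R) (Halpha : 1 < alpha) :
  (forall t, 0 <= t ->
     (forall f, Brho f -> forall n, ex_series (fun j => p alpha n j t * f j)) /\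
     (forall f, Brho f -> Brho (P alpha t f)) /\
     (forall f g c, Brho f -> Brho g ->
        P alpha t (fun n => c * f n + g n) = (fun n => c * P alpha t f n + P alpha t g n)) /\
     (exists C, forall f, Brho f ->
        Rbar_le (wnorm (P alpha t f)) (Rbar_mult (Finite C) (wnorm f)))) /\
  (forall t, 0 <= t -> forall n, Nat.odd n = true ->
     P alpha t rho n =
       rho n * exp (- Rpower (INR n) alpha * t)
       + rho (n + 1) * Rpower (INR n) alpha * t * exp (- Rpower (INR n) alpha * t) * exp (- INR n)
       + rho 0 * (1 - exp (- Rpower (INR n) alpha * t)
                  - exp (- INR n) * Rpower (INR n) alpha * t * exp (- Rpower (INR n) alpha * t))) /\
  (forall f, Brho f -> P alpha 0 f = f) /\
  (forall s t, 0 <= s -> 0 <= t -> forall f, Brho f ->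
     P alpha (t + s) f = P alpha s (P alpha t f)) /\
  (forall f, Brho f -> forall x,
     filterlim (fun t => P alpha t f x) (at_right 0) (locally (f x))) /\
  (forall t, 0 <= t -> forall f, Brho f -> (forall n, 0 <= f n) ->
     forall n, 0 <= P alpha t f n) /\
  (forall M : R, exists delta, 0 < delta /\
     forall t, 0 < t < delta -> Rbar_lt (Finite M) (opnorm alpha t)) /\
  ~ (exists eps C, 0 < eps /\ forall t, 0 <= t <= eps -> Rbar_le (opnorm alpha t) (Finite C)) /\
  ~ (forall f, Brho f -> forall eps, 0 < eps -> exists delta, 0 < delta /\
       forall t, 0 < t < delta ->
         Rbar_le (wnorm (fun n => P alpha t f n - f n)) (Finite eps)).
Proof.
  split; [intros t Ht; exact (P_bounded_operator alpha Halpha t Ht)|].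
  split.
  { intros t _ n Ho. rewrite P_Prow. unfold Prow, reset, jump, stay.
    rewrite Ho, (rate_odd alpha n Ho). ring. }
  split; [intros f _; rewrite P_Prow; apply Prow_time0|].
  split; [intros s t _ _ f _; rewrite !P_Prow; apply Prow_semigroup|].
  split.
  { intros f _ x. replace (fun t => P alpha t f x) with (fun t => Prow alpha t f x)
      by (apply functional_extensionality; intros t; now rewrite P_Prow).
    apply Prow_right_continuous. }
  split; [intros t Ht f _ Hf n; rewrite P_Prow; apply Prow_nonneg; assumption|].
  split; [apply opnorm_blowup, Halpha|].
  split; [apply not_locally_bounded, Halpha | apply not_strongly_continuous, Halpha].
Qed.
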